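(* If $X$ satisfies $selSS^*_{cd}(\mathcal{O},\Gamma)$, has countable extent, and $|X|<\mathfrak{d}$, then $X$ is selectively strongly star-Menger.
   Context: All spaces are regular. $St(A,\mathcal{U})=\bigcup\{U\in\mathcal{U}:U\cap A\neq\emptyset\}$. $\mathfrak{d}$ is the dominating number. $X$ has countable extent if every closed discrete subset of $X$ is countable. $selSS^*_{cd}(\mathcal{O},\Gamma)$: for every sequence $(\mathcal{U}_n:n\in\omega)$ of open covers and every sequence $(D_n:n\in\omega)$ of dense subsets of $X$ there are sets $C_n\subseteq D_n$, closed and discrete in $X$, such that every $x\in X$ lies in $St(C_n,\mathcal{U}_n)$ for all but finitely many $n$. $X$ is selectively strongly star-Menger if for every sequence $(\mathcal{U}_n)$ of open covers and every sequence $(D_n)$ of dense subsets there are finite $F_n\subseteq D_n$ with $\{St(F_n,\mathcal{U}_n):n\in\omega\}$ covering $X$. *)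

From HB Require Import structures.
From mathcomp Require Import all_boot all_order.
From mathcomp Require Import all_classical.
From mathcomp Require Import topology.
Set Implicit Arguments. Unset Strict Implicit. Unset Printing Implicit Defensive.
Local Open Scope classical_set_scope.

Definition star {T : Type} (A : set T) (U : set (set T)) : set T :=
  \bigcup_(V in [set V | U V /\ V `&` A !=set0]) V.

Definition open_cover {T : topologicalType} (U : set (set T)) : Prop :=
  (forall V, U V -> open V) /\ (forall x : T, exists2 V, U V & V x).

Definition closed_discrete {T : topologicalType} (C : set T) : Prop :=
  closed C /\ (forall c, C c -> exists V : set T, [/\ open V, V c & V `&` C = [set c]]).

Definition countable_extent (T : topologicalType) : Prop :=
  forall C : set T, closed_discrete C -> countable C.

Definition le_star (f g : nat -> nat) : Prop :=
  exists N, forall n, (N <= n)%N -> (f n <= g n)%N.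

Definition dominating (D : set (nat -> nat)) : Prop :=
  forall f, exists2 g, D g & le_star f g.

(* |X| < d  :  |X| < |D| for every dominating family D
   (d is the least cardinality of a dominating family) *)
Definition card_lt_dominating (T : Type) : Prop :=
  forall D : set (nat -> nat), dominating D ->
    ([set: T] #<= D)%card /\ ~ (D #<= [set: T])%card.

Definition selSS_cd_O_Gamma (T : topologicalType) : Prop :=
  forall (U : nat -> set (set T)) (D : nat -> set T),
    (forall n, open_cover (U n)) -> (forall n, dense (D n)) ->
    exists C : nat -> set T,
      (forall n, C n `<=` D n /\ closed_discrete (C n)) /\
      (forall x : T, exists N, forall n, (N <= n)%N -> star (C n) (U n) x).

Definition selectively_strongly_star_Menger (T : topologicalType) : Prop :=
  forall (U : nat -> set (set T)) (D : nat -> set T),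
    (forall n, open_cover (U n)) -> (forall n, dense (D n)) ->
    exists F : nat -> set T,
      (forall n, finite_set (F n) /\ F n `<=` D n) /\
      (forall x : T, exists n, star (F n) (U n) x).

From mathcomp Require Import all_boot all_order all_classical topology.
Local Open Scope classical_set_scope.

(* Apply selSS*_cd(O,Gamma) to the given covers U_n and dense
   sets D_n: this yields closed discrete C_n ⊆ D_n whose stars St(C_n, U_n)
   eventually contain every point.  By countable extent each C_n is
   countable, so it carries an injective code C_n -> nat.  For each point x
   record, at every stage n with x ∈ St(C_n, U_n), the code f_x(n) of a point
   c ∈ C_n whose star contains x.  The family {f_x : x ∈ X} has fewer than
   𝔡 members, so it is not dominating: some g : nat -> nat escapes every
   f_x infinitely often.  Let F_n be the points of C_n with code at most
   g(n); it is finite, and for each x some stage n beyond the point where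
   x ∈ St(C_n, U_n) has f_x(n) < g(n), so x ∈ St(F_n, U_n). *)

Lemma starE {T : Type} (A : set T) (U : set (set T)) (x : T) :
  star A U x <-> exists V, [/\ U V, V x & exists c, V c /\ A c].
Proof.
split.
- by case=> V [UV [c [Vc Ac]]] Vx; exists V; split => //; exists c.
- by case=> V [UV Vx [c [Vc Ac]]]; exists V => //; split => //; exists c.
Qed.

Lemma star_monotone {T : Type} (A B : set T) (U : set (set T)) :
  A `<=` B -> star A U `<=` star B U.
Proof.
move=> AB x /starE [V [UV Vx [c [Vc Ac]]]].
by apply/starE; exists V; split => //; exists c; split => //; apply: AB.
Qed.

Lemma star_point {T : Type} {A : set T} {U : set (set T)} {x : T} :
  star A U x -> exists2 c, A c & star [set c] U x.
Proof.
move=> /starE [V [UV Vx [c [Vc Ac]]]]; exists c => //.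
by apply/starE; exists V; split => //; exists c.
Qed.

Lemma star_code_sequence {T : Type} (A : nat -> set T)
    (U : nat -> set (set T)) (code : nat -> T -> nat) (x : T) :
  exists fx : nat -> nat, forall n, star (A n) (U n) x ->
    exists2 c, A n c /\ code n c = fx n & star [set c] (U n) x.
Proof.
suff [fx fxP] : {fx : nat -> nat & forall n, star (A n) (U n) x ->
    exists2 c, A n c /\ code n c = fx n & star [set c] (U n) x} by exists fx.
apply: (@choice nat nat (fun n k => star (A n) (U n) x ->
  exists2 c, A n c /\ code n c = k & star [set c] (U n) x)) => n.
case: (pselect (star (A n) (U n) x)) => [x_star|x_not_star].
- by have [c Ac cx] := star_point x_star; exists (code n c) => _; exists c.
- by exists 0%N => x_star; case: x_not_star.
Qed.

Lemma finite_code_bounded {T : Type} (A : set T) (code : T -> nat) (k : nat) :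
  {in A &, injective code} -> finite_set [set c | A c /\ (code c <= k)%N].
Proof.
move=> code_inj; apply/finite_set_leP; exists k.+1.
apply/pcard_leP/injfunPex; exists code.
  by move=> c [_ le] /=; rewrite /= ltnS.
by move=> a b /set_mem [Aa _] /set_mem [Bb _]; apply: code_inj; apply/mem_set.
Qed.

Lemma not_le_star_frequently {g h : nat -> nat} (N : nat) :
  ~ le_star g h -> exists n, (N <= n)%N /\ (h n < g n)%N.
Proof.
move=> not_le; apply: contrapT => none; apply: not_le; exists N => n Nn.
rewrite leqNgt; apply/negP => lt; apply: none; exists n; split => //.
Qed.

Lemma escaping_function {T : Type} (f : T -> nat -> nat) :
  card_lt_dominating T -> exists g, forall x, ~ le_star g (f x).
Proof.
move=> small; have not_dom : ~ dominating (range f).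
  by move=> dom; have [_] := small _ dom; apply; exact: card_image_le.
apply: contrapT => dominated; apply: not_dom => g.
apply: contrapT => not_dominated; apply: dominated; exists g => x le_gfx.
by apply: not_dominated; exists (f x) => //; exists x.
Qed.

Lemma closed_discrete_code {X : topologicalType} {C : set X} :
  countable_extent X -> closed_discrete C ->
  exists code : X -> nat, {in C &, injective code}.
Proof. by move=> ext Ccd; apply/countable_injP/ext. Qed.

Theorem mainTheorem13 (X : topologicalType) :
  regular_space X -> accessible_space X ->
  selSS_cd_O_Gamma X -> countable_extent X -> card_lt_dominating X ->
  selectively_strongly_star_Menger X.
Proof.
move=> _ _ sel ext small U D Ucov Ddense.
have [C [CD Cstar]] := sel U D Ucov Ddense.
have [code code_inj] := choice (fun n => closed_discrete_code ext (CD n).2).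
have [f f_code] := choice (star_code_sequence C U code).
have [g g_escapes] := escaping_function f small.
exists (fun n => [set c | C n c /\ (code n c <= g n)%N]); split.
  move=> n; split; first exact: finite_code_bounded.
  by move=> c [Cc _]; apply: (CD n).1.
move=> x; have [N xN] := Cstar x.
have [n [Nn fx_lt_g]] := not_le_star_frequently N (g_escapes x).
have [c [Cc code_c] cx] := f_code x n (xN n Nn).
exists n; apply: star_monotone cx => _ ->; split => //.
by rewrite code_c ltnW.
Qed.
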